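(* Let $d\ge2$, let $\mathcal{F}$ be a finite constraint family, and let $\phi$ be a $\mathrm{SAT}(\mathcal{F})$ formula on variables $x_1,\dots,x_n$. Let $F_d$ be the set of all assignments of weight at most $d$ that violate some constraint of $\phi$. Define $$\phi_d=\bigwedge_{a\in F_d}\mathrm{NAND}(\mathrm{ones}(a)),$$ where $\mathrm{NAND}(\mathrm{ones}(a))$ is the constraint that not all variables in $\mathrm{ones}(a)$ are $1$. Then the following hold. (P1) If $\mathcal{F}$ avoids $\mathrm{NAND}_{d+1}$, then every satisfying assignment of $\phi_d$ is a satisfying assignment of $\phi$. (P2) If $a$ is a $d$-robust satisfying assignment of $\phi$, then $a$ satisfies $\phi_d$.
   Context: A $\mathrm{SAT}(\mathcal{F})$ formula is a conjunction of constraints $f(x_{i_1},\dots,x_{i_r})$ with $f\in\mathcal{F}$ and $i_j\in[n]$ not necessarily distinct. For an assignment $a:[n]\to\{0,1\}$, its weight is $\sum_i a(i)$, and $\mathrm{ones}(a)=\{x_i: a(i)=1\}$. We write $a'\le a$ if $a'(i)\le a(i)$ for all $i$. A weight-$k$ assignment $a$ satisfying $\phi$ is $d$-robust if no assignment $a'\le a$ of weight at most $d$ violates $\phi$. $\mathrm{NAND}_{d+1}(y_1,\dots,y_{d+1})=\overline{y_1\wedge\cdots\wedge y_{d+1}}$. $\mathcal{F}$ avoids $\mathrm{NAND}_{d+1}$ if no $f\in\mathcal{F}$ has it as a restriction. A restriction of $f:\{0,1\}^r\to\{0,1\}$ is obtained by choosing pairwise disjoint, possibly empty, sets $X_1,\dots,X_s,Z_0,Z_1$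 with union $[r]$, and substituting the new argument $x_j$ at the positions in $X_j$, $0$ at the positions in $Z_0$, and $1$ at the positions in $Z_1$. *)

From Stdlib Require List.
From mathcomp Require Import all_boot.
Set Implicit Arguments. Unset Strict Implicit. Unset Printing Implicit Defensive.

Record constr := Constr { arity : nat; cfun : ('I_arity -> bool) -> bool }.

Definition cfamily := seq constr.

(* A constraint application f(x_{i_1},...,x_{i_r}) on variables x_0..x_{n-1};
   the indices need not be distinct. *)
Record capp (n : nat) := CApp { ccon : constr; cargs : 'I_(arity ccon) -> 'I_n }.

Definition formula n := seq (capp n).

Definition is_SAT_formula (F : cfamily) n (phi : formula n) : Prop :=
  forall C, List.In C phi -> List.In (ccon C) F.

Definition assignment n := 'I_n -> bool.

Definition sat_capp n (C : capp n) (a : assignment n) : bool :=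
  @cfun (ccon C) (fun p => a (@cargs n C p)).

Definition satisfies n (phi : formula n) (a : assignment n) : Prop :=
  forall C, List.In C phi -> sat_capp C a.

Definition violates n (phi : formula n) (a : assignment n) : Prop :=
  exists C, List.In C phi /\ ~~ sat_capp C a.

Definition weight n (a : assignment n) : nat := #|[set i | a i]|.
Definition ones n (a : assignment n) : {set 'I_n} := [set i | a i].
Definition le_assign n (a' a : assignment n) : Prop := forall i, a' i <= a i.

Definition robust n (phi : formula n) (d : nat) (a : assignment n) : Prop :=
  satisfies phi a /\
  forall a', le_assign a' a -> weight a' <= d -> ~ violates phi a'.

Definition NAND_set n (S : {set 'I_n}) (b : assignment n) : bool :=
  ~~ [forall i in S, b i].

Definition F_d n (phi : formula n) (d : nat) (a : assignment n) : Prop :=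
  weight a <= d /\ violates phi a.

Definition satisfies_phi_d n (phi : formula n) (d : nat) (b : assignment n) : Prop :=
  forall a, F_d phi d a -> NAND_set (ones a) b.

Definition NANDk (k : nat) (y : 'I_k -> bool) : bool := ~~ [forall j, y j].

(* g : ('I_s -> bool) -> bool is a restriction of f: each position of f gets
   a new variable x_j (positions in X_j), or the constant 0/1 (Z_0 / Z_1). *)
Definition is_restriction (f : constr) (s : nat) (g : ('I_s -> bool) -> bool) : Prop :=
  exists m : 'I_(arity f) -> 'I_s + bool,
    forall y : 'I_s -> bool,
      @cfun f (fun p => match m p with inl j => y j | inr c => c end) = g y.

Definition avoids_NAND (F : cfamily) (k : nat) : Prop :=
  forall f, List.In f F -> ~ is_restriction f (@NANDk k).

(* If [b] violates a constraint [C] of [phi], pick a minimal [T] inside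
   [ones b] whose indicator still violates [C].  When [#|T| <= d] the
   indicator of [T] lies in [F_d], and the clause [NAND(T)] of [phi_d] is
   falsified by [b].  Otherwise cut [T] into [d+1] nonempty blocks, give each
   block a fresh variable and set the variables outside [T] to [0]: by
   minimality, [C] is violated exactly when all blocks are [1], i.e. [C]
   restricts to [NAND_(d+1)].  Part (P2) is immediate: a clause of [phi_d]
   falsified by [a] comes from a light violating assignment below [a]. *)

From Stdlib Require Import FunctionalExtensionality.
From mathcomp Require Import all_boot.

Set Implicit Arguments.
Unset Strict Implicit.
Unset Printing Implicit Defensive.

Definition assign_of_set n (T : {set 'I_n}) : assignment n := fun i => i \in T.

Lemma eq_sat_capp n (C : capp n) (a b : assignment n) :
  a =1 b -> sat_capp C a = sat_capp C b.
Proof. by move=> /functional_extensionality ->. Qed.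

Lemma ones_assign_of_set n (T : {set 'I_n}) : ones (assign_of_set T) = T.
Proof. by apply/setP => i; rewrite inE. Qed.

Lemma assign_of_set_ones n (b : assignment n) : assign_of_set (ones b) =1 b.
Proof. by move=> i; rewrite /assign_of_set inE. Qed.

Lemma weight_assign_of_set n (T : {set 'I_n}) : weight (assign_of_set T) = #|T|.
Proof. by rewrite /weight -/(ones _) ones_assign_of_set. Qed.

Lemma NAND_setE n (S : {set 'I_n}) (b : assignment n) :
  NAND_set S b = ~~ (S \subset ones b).
Proof.
congr negb; apply/forall_inP/subsetP => [Sb i /Sb | Sb i /Sb]; by rewrite inE.
Qed.

Lemma le_assignP n (a' a : assignment n) :
  reflect (le_assign a' a) (ones a' \subset ones a).
Proof.
apply: (iffP subsetP) => [sub i | le i]; [move: (sub i) | move: (le i)];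
  by rewrite !inE; case: (a' i); case: (a i) => //; apply.
Qed.

Lemma onto_ord_of_card (X : finType) (A : {set X}) k :
  k < #|A| -> exists h : X -> 'I_k.+1, forall j, exists2 x, x \in A & h x = j.
Proof.
move=> kA; have [x0 _] : exists x0 : X, x0 \in A.
  by apply/set0Pn; rewrite -card_gt0 (leq_ltn_trans _ kA).
exists (fun x => inord (minn (index x (enum A)) k)) => j.
have jA : j < size (enum A) by rewrite -cardE (leq_trans (ltn_ord j) kA).
exists (nth x0 (enum A) j); first by rewrite -mem_enum mem_nth.
by rewrite index_uniq ?enum_uniq // (minn_idPl _) ?inord_val // -ltnS.
Qed.

Definition violating_set n (C : capp n) : pred {set 'I_n} :=
  [pred T | ~~ sat_capp C (assign_of_set T)].

Lemma minset_violating_restriction n (C : capp n) (T : {set 'I_n}) k :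
  minset (violating_set C) T -> k < #|T| -> is_restriction (ccon C) (@NANDk k.+1).
Proof.
move=> /minsetP[violT minT] /onto_ord_of_card[h h_onto].
exists (fun p => if @cargs n C p \in T then inl (h (@cargs n C p)) else inr false).
move=> y; set T' := [set i in T | y (h i)].
transitivity (sat_capp C (assign_of_set T')).
  congr cfun; apply: functional_extensionality => p.
  by rewrite /assign_of_set inE; case: (_ \in T).
have subT' : T' \subset T by apply/subsetP => i; rewrite inE => /andP[].
rewrite /NANDk; case: (boolP [forall j, y j]) => [/forallP yT | /forallPn[j yj]].
  suff -> : T' = T by apply/negbTE.
  by apply/setP => i; rewrite inE; case: (i \in T); rewrite ?yT.
have [x xT hx] := h_onto j.
apply/negPn/negP => violT'.
by have /setP/(_ x) := minT T' violT' subT'; rewrite !inE xT hx (negbTE yj).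
Qed.

Lemma robust_phi_d n (phi : formula n) d (a : assignment n) :
  robust phi d a -> satisfies_phi_d phi d a.
Proof.
move=> [_ robust_a] a' [light_a' viol_a']; rewrite NAND_setE.
by apply/negP => /le_assignP le_a'a; apply: (robust_a a').
Qed.

Lemma phi_d_sat_avoiding F n (phi : formula n) d (b : assignment n) :
  is_SAT_formula F phi -> avoids_NAND F d.+1 ->
  satisfies_phi_d phi d b -> satisfies phi b.
Proof.
move=> phiF avoidF b_phi_d C Cphi; apply/negPn/negP => violC.
have [T minT Tb] : {T | minset (violating_set C) T & T \subset ones b}.
  by apply: minset_exists; rewrite /violating_set /= (eq_sat_capp _ (assign_of_set_ones b)).
case: (leqP #|T| d) => [Td | dT].
  suff /b_phi_d : F_d phi d (assign_of_set T).
    by rewrite ones_assign_of_set NAND_setE Tb.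
  split; first by rewrite weight_assign_of_set.
  by exists C; split=> //; exact: minsetp minT.
exact: avoidF (ccon C) (phiF C Cphi) (minset_violating_restriction minT dT).
Qed.

Theorem mainTheorem7 (d : nat) (F : cfamily) (n : nat) (phi : formula n) :
  2 <= d -> is_SAT_formula F phi ->
  (avoids_NAND F d.+1 ->
     forall b : assignment n, satisfies_phi_d phi d b -> satisfies phi b) /\
  (forall a : assignment n, robust phi d a -> satisfies_phi_d phi d a).
Proof.
move=> _ phiF; split => [avoidF b | a].
  exact: phi_d_sat_avoiding phiF avoidF.
exact: robust_phi_d.
Qed.
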